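(* Let $N=N_1+N_2$ with $N_1\ge0$, $N_2\ge1$, $N<L$, let $Y=(y_1,\dots,y_{N_2})\in\mathbb Z^{N_2}$ with $-L+N_1+1\le y_1<\cdots<y_{N_2}=0$, let $z_1\ne0$, and let $w_1,\dots,w_N\in\mathcal S_{z_1}$. Then $$\sum_{\tilde Y\in\tilde{\mathcal Y}_{N_1}(L;y_1)}\det\big[w_i^j(w_i+1)^{\tilde y_j-j}1_{j\le N_1}+w_i^j(w_i+1)^{y_{j-N_1}-j}1_{j>N_1}\big]_{i,j=1}^N=\det\big[w_i^{j-1}(w_i+1)^{y_1-N_1}1_{j\le N_1}+w_i^j(w_i+1)^{y_{j-N_1}-j}1_{j>N_1}\big]_{i,j=1}^N.$$
   Context: $\mathcal S_z$ is the set of roots of $w^N(w+1)^{L-N}=z^L$. $\tilde{\mathcal Y}_{N_1}(L;y_1)=\{(\tilde y_1,\dots,\tilde y_{N_1})\in\mathbb Z^{N_1}:-L+1\le\tilde y_1<\cdots<\tilde y_{N_1}\le y_1-1\}$. *)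

From HB Require Import structures.
From mathcomp Require Import all_boot all_order all_algebra.
From mathcomp Require Export complex.
Set Implicit Arguments. Unset Strict Implicit. Unset Printing Implicit Defensive.
Import Order.TTheory GRing.Theory Num.Theory.
Local Open Scope ring_scope.

(* Complex numbers are modelled as R[i] = complex R for a real closed field R
   (for R the real numbers this is exactly C). *)

(* w \in S_z  :<=>  w^N (w+1)^(L-N) = z^L   (here N < L, so L-N is a nat). *)
Definition in_S (R : rcfType) (N L : nat) (z w : R[i]) : Prop :=
  w ^+ N * (w + 1) ^+ (L - N) = z ^+ L.

(* The index set  tilde Y_{N1}(L; y1) = { (ty_1 < ... < ty_{N1}) in Z^{N1} :
   -L+1 <= ty_1 < ... < ty_{N1} <= y1 - 1 }, enumerated as a duplicate-free
   list of N1-tuples of integers (0-based: ty_{j+1} = t`_j).  We enumerate all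
   tuples with entries -L+1+i, i < |y1| + L (a superset of the allowed range,
   injectively), and keep exactly those satisfying the defining condition. *)
Definition Ytilde (N1 L : nat) (y1 : int) : seq (N1.-tuple int) :=
  [seq t <- [seq map_tuple (fun i : 'I_(absz y1 + L) => - (L%:Z) + 1 + (i : nat)%:Z) u
            | u <- enum {: N1.-tuple 'I_(absz y1 + L)}]
   | [&& sorted <%R (tval t),
         all (fun a => - (L%:Z) + 1 <= a) (tval t) &
         all (fun a => a <= y1 - 1) (tval t)]].

From mathcomp Require Import all_boot all_order all_algebra.
From mathcomp Require Import complex.
From mathcomp Require Import zify ring.
Import Order.TTheory GRing.Theory Num.Theory.
Local Open Scope ring_scope.

Set Implicit Arguments.
Unset Strict Implicit.
Unset Printing Implicit Defensive.

(* Since [w^j (w+1)^(t-j) = w^(j-1) (w+1)^(t-j+1) - w^(j-1) (w+1)^(t-j)], the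
   column indexed by [t_j] is a difference in [t_j], so by multilinearity of the
   determinant the sum over the tuple can be carried out one coordinate at a time:
   the sum over [t_(j-1) < t_j < y_1] telescopes to the column
   [w^(j-1) (w+1)^(y_1-j)] minus a boundary column that repeats column [j-1] and
   so contributes nothing.  For [j = 1] the boundary column is [(w+1)^(-L)], which
   is proportional to the last column [w^N (w+1)^(-N)] because
   [w^N (w+1)^(L-N) = z^L].  Finally, working from right to left, the binomial
   expansion [w^(j-1) (w+1)^(y_1-j) = sum_q C(N_1-j, q) w^(j-1+q) (w+1)^(y_1-N_1)]
   is a column operation, turning these columns into [w^(j-1) (w+1)^(y_1-N_1)]. *)

Section ColumnMatrices.

Variables (R : comPzRingType) (n : nat).
Implicit Types (c : nat -> 'I_n -> R) (x y : 'I_n -> R).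

Definition colmx c : 'M[R]_n := \matrix_(i, j) c j i.

Definition set_col c m x : nat -> 'I_n -> R :=
  fun j => if j == m then x else c j.

Lemma det_colmx_ext c1 c2 : c1 =2 c2 -> \det (colmx c1) = \det (colmx c2).
Proof. by move=> e; congr (\det _); apply/matrixP => i j; rewrite !mxE e. Qed.

Lemma det_colmx_set c m x (hm : (m < n)%N) :
  \det (colmx (set_col c m x)) =
  \sum_i x i * cofactor (colmx (set_col c m (fun _ => 0))) i (Ordinal hm).
Proof.
rewrite (expand_det_col _ (Ordinal hm)); apply: eq_bigr => i _.
rewrite mxE /set_col eqxx; congr (_ * (_ * \det _)).
apply/matrixP => a b; rewrite !mxE /set_col.
by have := neq_lift (Ordinal hm) b; rewrite eq_sym -val_eqE => /negbTE ->.
Qed.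

Lemma det_colmx_set_sum (I : Type) (r : seq I) (P : pred I) (xs : I -> 'I_n -> R) c m :
  (m < n)%N ->
  \det (colmx (set_col c m (fun i => \sum_(k <- r | P k) xs k i))) =
  \sum_(k <- r | P k) \det (colmx (set_col c m (xs k))).
Proof.
move=> hm; rewrite det_colmx_set; under eq_bigr do rewrite mulr_suml.
by rewrite exchange_big; apply: eq_bigr => k _; rewrite det_colmx_set.
Qed.

Lemma det_colmx_set_scale c m a x : (m < n)%N ->
  \det (colmx (set_col c m (fun i => a * x i))) = a * \det (colmx (set_col c m x)).
Proof.
move=> hm; rewrite !det_colmx_set mulr_sumr.
by apply: eq_bigr => i _; rewrite mulrA.
Qed.

Lemma det_colmx_set_sub c m x y : (m < n)%N ->
  \det (colmx (set_col c m (fun i => x i - y i))) =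
  \det (colmx (set_col c m x)) - \det (colmx (set_col c m y)).
Proof.
move=> hm; rewrite !det_colmx_set -sumrB.
by apply: eq_bigr => i _; rewrite mulrBl.
Qed.

Lemma det_colmx_eq_col c m1 m2 : (m1 < n)%N -> (m2 < n)%N -> m1 != m2 ->
  c m1 =1 c m2 -> \det (colmx c) = 0.
Proof.
move=> h1 h2 ne e; rewrite -det_tr.
apply: (@determinant_alternate _ _ _ (Ordinal h1) (Ordinal h2)) => // j.
by rewrite !mxE /= e.
Qed.

Lemma det_colmx_proportional c m1 m2 a : (m1 < n)%N -> (m2 < n)%N -> m1 != m2 ->
  (forall i, c m2 i = a * c m1 i) -> \det (colmx c) = 0.
Proof.
move=> h1 h2 ne e.
rewrite (@det_colmx_ext c (set_col c m2 (fun i => a * c m1 i))); last first.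
  by move=> j i; rewrite /set_col; case: eqP => // ->.
rewrite det_colmx_set_scale // (@det_colmx_eq_col _ m1 m2) ?mulr0 //.
by move=> i; rewrite /set_col eqxx (negbTE ne).
Qed.

End ColumnMatrices.

Section PowerColumns.

Variables (R : comUnitRingType) (n : nat) (w : 'I_n -> R).
Hypothesis w1_unit : forall i, w i + 1 \is a GRing.unit.

Definition wcol (s : int) (j : nat) : 'I_n -> R := fun i => w i ^+ j * (w i + 1) ^ s.

Lemma wcolD1 s j i : wcol (s + 1) j i = wcol s j i + wcol s j.+1 i.
Proof. by rewrite /wcol exprzDr // expr1z exprS; ring. Qed.

Lemma telescope_wcol s j k i :
  \sum_(0 <= q < k) wcol (s + q%:Z) j.+1 i = wcol (s + k%:Z) j i - wcol s j i.
Proof.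
rewrite (telescope_sumr_eq (fun q => wcol (s + q%:Z) j i)) ?addr0 // => q _.
have -> : s + q.+1%:Z = s + q%:Z + 1 by lia.
by rewrite wcolD1 addrAC subrr add0r.
Qed.

Lemma wcol_binomial s k j i :
  wcol (s + k%:Z) j i = \sum_(q < k.+1) wcol s (j + q) i *+ 'C(k, q).
Proof.
rewrite /wcol exprzDr // -exprnP exprD1n mulr_sumr mulr_sumr.
by apply: eq_bigr => q _; rewrite !mulrnAr exprD; congr (_ *+ _); ring.
Qed.

Lemma wcol_root N L z i : (N <= L)%N ->
  w i ^+ N * (w i + 1) ^+ (L - N) = z ^+ L ->
  wcol (- N%:Z) N i = z ^+ L * wcol (- L%:Z) 0 i.
Proof.
move=> hNL <-; rewrite /wcol expr0 mul1r -mulrA [(w i + 1) ^+ _]exprnP -exprzDr //.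
by congr (_ * _ ^ _); lia.
Qed.

End PowerColumns.

Fixpoint incr_seqs (K : nat) (lo : int) (k : nat) : seq (seq int) :=
  if K is K'.+1 then
    [seq (lo + q%:Z) :: s | q <- index_iota 0 k, s <- incr_seqs K' (lo + q%:Z + 1) (k - q.+1)]
  else [:: [::]].

Lemma incr_seqsS K lo k :
  incr_seqs K.+1 lo k =
  [seq (lo + q%:Z) :: s | q <- index_iota 0 k, s <- incr_seqs K (lo + q%:Z + 1) (k - q.+1)].
Proof. by []. Qed.

Lemma mem_incr_seqs K lo k s :
  (s \in incr_seqs K lo k) =
  [&& size s == K, sorted <%R s & all (fun a => (lo <= a) && (a < lo + k%:Z)) s].
Proof.
elim: K lo k s => [|K IH] lo k s; first by case: s => [|a s]; rewrite ?inE.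
rewrite incr_seqsS; apply/allpairsPdep/idP.
  case=> q [t [+ + ->]]; rewrite mem_index_iota IH => hq /and3P [/eqP <- t_sorted t_in].
  rewrite /= eqxx (path_sortedE lt_trans) t_sorted andbT /=.
  apply/and3P; split; [| lia |]; apply/allP => a /(allP t_in) /andP [? ?] /=;
    [lia | apply/andP; split; lia].
case: s => [|a t] //= /and3P [/eqP [t_size]].
rewrite (path_sortedE lt_trans) => /andP [a_lt t_sorted] /andP [/andP [lo_a a_hi] t_in].
exists `|a - lo|%N, t; split.
- by rewrite mem_index_iota; lia.
- rewrite IH t_size eqxx t_sorted /=; apply/allP => b bt.
  by move: (allP t_in b bt) (allP a_lt b bt) => /andP [? ?] ?; apply/andP; split; lia.
- by congr (_ :: _); lia.
Qed.

Lemma uniq_incr_seqs K lo k : uniq (incr_seqs K lo k).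
Proof.
elim: K lo k => [|K IH] lo k //=.
apply: allpairs_uniq_dep => [|q _|[q1 s1] [q2 s2] _ _ /= [/addrI/eqP]]; rewrite ?iota_uniq //.
by rewrite eqz_nat => /eqP -> ->.
Qed.

Lemma mem_Ytilde N1 L y1 s : (0 < L)%N ->
  (s \in map val (Ytilde N1 L y1)) =
  [&& size s == N1, sorted <%R s & all (fun a => (- L%:Z + 1 <= a) && (a < y1)) s].
Proof.
move=> L_gt0; set f := fun i : 'I_(`|y1| + L) => - L%:Z + 1 + (i : nat)%:Z.
apply/mapP/idP.
  case=> t; rewrite mem_filter => /andP [/and3P [t_sorted /allP t_lo /allP t_hi] _] ->.
  rewrite size_tuple eqxx t_sorted /=; apply/allP => a ta.
  by move: (t_lo a ta) (t_hi a ta) => ? ?; apply/andP; split; lia.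
case/and3P => /eqP s_size s_sorted /allP s_in.
have card_gt0 : (0 < `|y1| + L)%N by rewrite addn_gt0 L_gt0 orbT.
pose g (a : int) : 'I_(`|y1| + L) := insubd (Ordinal card_gt0) (absz (a + L%:Z - 1)%R).
have gK : {in s, cancel g f}.
  move=> a /s_in /andP [? ?]; rewrite /f /g val_insubd.
  have -> : (absz (a + L%:Z - 1)%R < `|y1| + L)%N by lia.
  lia.
have size_gs : size (map g s) == N1 by rewrite size_map s_size.
have fgs : map f (map g s) = s by rewrite -map_comp; apply: map_id_in.
exists (map_tuple f (Tuple size_gs)); last by rewrite /= fgs.
rewrite mem_filter /= fgs s_sorted /=; apply/andP; split.
  by apply/andP; split; apply/allP => a /s_in /andP [? ?]; lia.
by apply/mapP; exists (Tuple size_gs); rewrite ?mem_enum.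
Qed.

Lemma uniq_Ytilde N1 L y1 : uniq (map val (Ytilde N1 L y1)).
Proof.
rewrite (map_inj_uniq val_inj) filter_uniq // map_inj_uniq ?enum_uniq //.
move=> u1 u2 /(congr1 val) /= /inj_map u12; apply: val_inj; apply: u12 => i j /=.
by move/addrI/eqP; rewrite eqz_nat => /eqP; apply: val_inj.
Qed.

Lemma big_Ytilde (V : nmodType) N1 L y1 k (G : seq int -> V) :
  (0 < L)%N -> - L%:Z + 1 + k%:Z = y1 ->
  \sum_(t <- Ytilde N1 L y1) G t = \sum_(s <- incr_seqs N1 (- L%:Z + 1) k) G s.
Proof.
move=> L_gt0 hk; rewrite -(big_map val predT G); apply: perm_big.
apply: uniq_perm; [exact: uniq_Ytilde | exact: uniq_incr_seqs|] => s.
by rewrite mem_Ytilde // mem_incr_seqs hk.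
Qed.

Section PartialColumns.

Variables (R : comUnitRingType) (n N1 : nat) (w : 'I_n -> R).
Variables (rest : nat -> 'I_n -> R) (y1 : int).
Hypotheses (w1_unit : forall i, w i + 1 \is a GRing.unit) (N1_le : (N1 <= n)%N).

(* The first [size p] summation indices are fixed to [p]; the sums over the
   remaining [N1 - size p] indices have already been carried out. *)
Definition partial_cols (p : seq int) : nat -> 'I_n -> R := fun j =>
  if (j < size p)%N then wcol w (p`_j - j.+1%:Z) j.+1
  else if (j < N1)%N then wcol w (y1 - j.+1%:Z) j
  else rest j.

Lemma partial_cols_rcons p a :
  partial_cols (rcons p a) =2
  set_col (partial_cols p) (size p) (wcol w (a - (size p).+1%:Z) (size p).+1).
Proof.
move=> j i; rewrite /partial_cols /set_col size_rcons nth_rcons.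
by case: (ltngtP j (size p)) => [hj|hj|->];
  [rewrite ltnS ltnW | rewrite ltnS leqNgt hj | rewrite ltnSn].
Qed.

Lemma set_col_partial_cols_id p : (size p < N1)%N ->
  set_col (partial_cols p) (size p) (wcol w (y1 - (size p).+1%:Z) (size p)) =2 partial_cols p.
Proof. by move=> hp j i; rewrite /set_col /partial_cols; case: eqP => // ->; rewrite ltnn hp. Qed.

Lemma sum_det_partial_cols_rcons p lo k : (size p < N1)%N -> lo + k%:Z = y1 ->
  \sum_(0 <= q < k) \det (colmx (partial_cols (rcons p (lo + q%:Z)))) =
  \det (colmx (partial_cols p)) -
  \det (colmx (set_col (partial_cols p) (size p) (wcol w (lo - (size p).+1%:Z) (size p)))).
Proof.
move=> hp hk; set m := size p; have hm : (m < n)%N by apply: leq_trans N1_le.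
have shift q : lo + q%:Z - m.+1%:Z = lo - m.+1%:Z + q%:Z by ring.
have telescope i : \sum_(0 <= q < k) wcol w (lo + q%:Z - m.+1%:Z) m.+1 i =
                   wcol w (y1 - m.+1%:Z) m i - wcol w (lo - m.+1%:Z) m i.
  by under eq_bigr do rewrite shift; rewrite telescope_wcol // -hk shift.
under eq_bigr do rewrite (det_colmx_ext (partial_cols_rcons _ _)).
rewrite -(det_colmx_set_sum _ _ (fun q => wcol w (lo + q%:Z - m.+1%:Z) m.+1)) //.
rewrite (det_colmx_ext (c2 := set_col (partial_cols p) m
          (fun i => wcol w (y1 - m.+1%:Z) m i - wcol w (lo - m.+1%:Z) m i))); last first.
  by move=> j i; rewrite /set_col; case: eqP.
by rewrite det_colmx_set_sub // (det_colmx_ext (set_col_partial_cols_id hp)).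
Qed.

(* The boundary term of the next telescoping sum repeats the column just fixed. *)
Lemma det_partial_cols_rcons_boundary p a : ((size p).+1 < N1)%N ->
  \det (colmx (set_col (partial_cols (rcons p a)) (size p).+1
                 (wcol w (a + 1 - (size p).+2%:Z) (size p).+1))) = 0.
Proof.
move=> hp; apply: (@det_colmx_eq_col _ _ _ (size p) (size p).+1).
- by apply: leq_trans N1_le; apply: ltnW.
- exact: leq_trans N1_le.
- by rewrite neq_ltn ltnSn.
move=> i; rewrite /set_col eqxx (ltn_eqF (ltnSn _)) /partial_cols size_rcons ltnSn.
by rewrite nth_rcons ltnn eqxx; congr wcol; lia.
Qed.

Lemma sum_det_partial_cols_cat K p lo k : (size p + K < N1)%N -> lo + k%:Z = y1 ->
  \sum_(s <- incr_seqs K.+1 lo k) \det (colmx (partial_cols (p ++ s))) =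
  \det (colmx (partial_cols p)) -
  \det (colmx (set_col (partial_cols p) (size p) (wcol w (lo - (size p).+1%:Z) (size p)))).
Proof.
elim: K p lo k => [|K IH] p lo k hK hk;
  (have hp : (size p < N1)%N by apply: leq_ltn_trans hK; apply: leq_addr);
  rewrite incr_seqsS big_allpairs_dep -(@sum_det_partial_cols_rcons p lo k) //;
  apply: eq_big_seq => q; rewrite mem_index_iota => /andP [_ hq].
  by rewrite big_seq1 cats1.
under eq_bigr do rewrite -cat_rcons.
rewrite IH ?size_rcons ?addSnnS //; last by lia.
by rewrite det_partial_cols_rcons_boundary ?subr0 // (leq_ltn_trans _ hK) // -addSnnS leq_addr.
Qed.

(* Interpolates between [partial_cols [::]] (at [k = N1]) and the columns of the
   right-hand side (at [k = 0]). *)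
Definition mixed_cols (k : nat) : nat -> 'I_n -> R := fun j =>
  if (j < k)%N then wcol w (y1 - j.+1%:Z) j
  else if (j < N1)%N then wcol w (y1 - N1%:Z) j
  else rest j.

Lemma det_mixed_colsS k : (k < N1)%N ->
  \det (colmx (mixed_cols k.+1)) = \det (colmx (mixed_cols k)).
Proof.
move=> hk; have hkn : (k < n)%N by apply: leq_trans N1_le.
have expand : mixed_cols k.+1 =2 set_col (mixed_cols k) k
    (fun i => \sum_(q < (N1 - k.+1).+1) wcol w (y1 - N1%:Z) (k + q) i *+ 'C(N1 - k.+1, q)).
  move=> j i; rewrite /mixed_cols /set_col.
  case: (ltngtP j k) => [hj|hj|->]; [by rewrite ltnS ltnW | by rewrite ltnS leqNgt hj |].
  by rewrite ltnSn /= -wcol_binomial //; congr wcol; lia.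
rewrite (det_colmx_ext expand) det_colmx_set_sum // big_ord_recl big1 ?addr0.
  apply: det_colmx_ext => j i; rewrite /set_col; case: eqP => // ->.
  by rewrite /mixed_cols ltnn hk /= addn0 bin0 mulr1n.
(* The binomial terms with [q > 0] are multiples of later columns. *)
move=> q _; rewrite lift0.
have kq : (k < k + q.+1)%N by rewrite addnS ltnS leq_addr.
have kqN1 : (k + q.+1 < N1)%N by have := ltn_ord q; lia.
apply: (@det_colmx_proportional _ _ _ (k + q.+1) k ('C(N1 - k.+1, q.+1))%:R).
- exact: leq_trans N1_le.
- by [].
- by rewrite gtn_eqF.
move=> i; rewrite /set_col eqxx (gtn_eqF kq) mulr_natl.
by rewrite /mixed_cols ltnNge (ltnW kq) kqN1.
Qed.

Lemma det_partial_cols_nil :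
  \det (colmx (partial_cols [::])) =
  \det (colmx (fun j => if (j < N1)%N then wcol w (y1 - N1%:Z) j else rest j)).
Proof.
have -> : \det (colmx (partial_cols [::])) = \det (colmx (mixed_cols N1)).
  by apply: det_colmx_ext => j i; rewrite /partial_cols /mixed_cols ltn0; case: ifP.
have down k : (k <= N1)%N -> \det (colmx (mixed_cols k)) = \det (colmx (mixed_cols 0)).
  by elim: k => // k IH hk; rewrite det_mixed_colsS ?IH // ltnW.
by rewrite down //; apply: det_colmx_ext => j i; rewrite /mixed_cols ltn0.
Qed.

Lemma det_partial_cols_nil_boundary s a : (0 < N1)%N -> (N1 < n)%N ->
  (forall i, rest n.-1 i = a * wcol w s 0 i) ->
  \det (colmx (set_col (partial_cols [::]) 0 (wcol w s 0))) = 0.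
Proof.
move=> N1_gt0 N1_lt rest_last.
apply: (@det_colmx_proportional _ _ _ 0 n.-1 a); try lia.
move=> i; rewrite /set_col eqxx (_ : (n.-1 == 0) = false); last by lia.
by rewrite /partial_cols /= ltnNge (_ : (N1 <= n.-1)%N = true) //; lia.
Qed.

End PartialColumns.

Lemma in_S_addr1_neq0 (R : rcfType) N L (z w : R[i]) :
  (N < L)%N -> z != 0 -> in_S N L z w -> w + 1 != 0.
Proof.
move=> NL z_neq0; rewrite /in_S; apply: contra_eqN => /eqP ->.
by rewrite expr0n subn_eq0 leqNgt NL mulr0 eq_sym expf_eq0 (negbTE z_neq0) andbF.
Qed.

Theorem lemma11p8 (R : rcfType) (N1 N2 L : nat) (Y : seq int) (z : R[i])
    (w : 'I_(N1 + N2) -> R[i]) :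
  (1 <= N2)%N -> (N1 + N2 < L)%N ->
  size Y = N2 ->
  sorted <%R Y ->
  - (L%:Z) + (N1%:Z) + 1 <= Y`_0 ->
  Y`_(N2.-1) = 0 ->
  z != 0 ->
  (forall i, in_S (N1 + N2) L z (w i)) ->
  \sum_(t <- Ytilde N1 L (Y`_0))
     \det (\matrix_(i < N1 + N2, j < N1 + N2)
             (if (j < N1)%N
              then w i ^+ j.+1 * (w i + 1) ^ (t`_j - (j.+1)%:Z)
              else w i ^+ j.+1 * (w i + 1) ^ (Y`_(j - N1) - (j.+1)%:Z)))
  = \det (\matrix_(i < N1 + N2, j < N1 + N2)
             (if (j < N1)%N
              then w i ^+ j * (w i + 1) ^ (Y`_0 - N1%:Z)
              else w i ^+ j.+1 * (w i + 1) ^ (Y`_(j - N1) - (j.+1)%:Z))).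
Proof.
move=> N2_gt0 NL _ _ y1_ge Y_last z_neq0 w_in_S.
have w1_unit i : w i + 1 \is a GRing.unit.
  by rewrite unitfE (in_S_addr1_neq0 NL z_neq0 (w_in_S i)).
have N1_le := leq_addr N2 N1.
have [k hk] : exists k : nat, - L%:Z + 1 + k%:Z = Y`_0.
  by exists (absz (Y`_0 + L%:Z - 1)%R); lia.
pose rest j := wcol w (Y`_(j - N1) - j.+1%:Z) j.+1.
pose cols := partial_cols N1 w rest (Y`_0).
rewrite (eq_bigr (fun t : N1.-tuple int => \det (colmx (cols t)))); last first.
  move=> t _; congr (\det _); apply/matrixP => i j.
  by rewrite !mxE /cols /partial_cols size_tuple; case: ifP.
rewrite (big_Ytilde _ (fun s => \det (colmx (cols s))) _ hk); last exact: leq_ltn_trans NL.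
rewrite (_ : \matrix_(i, j) _ = colmx (fun j =>
                 if (j < N1)%N then wcol w (Y`_0 - N1%:Z) j else rest j)); last first.
  by apply/matrixP => i j; rewrite !mxE; case: ifP.
rewrite -det_partial_cols_nil //.
case: (posnP N1) => [N1_0 | N1_gt0]; first by rewrite [in incr_seqs N1 _ _]N1_0 big_seq1.
rewrite -[in incr_seqs N1 _ _](prednK N1_gt0).
rewrite (sum_det_partial_cols_cat rest w1_unit N1_le (p := [::])) //= ?prednK //.
rewrite (det_partial_cols_nil_boundary (Y`_0) N1_le (a := z ^+ L)) ?subr0 //; first by lia.
move=> i; rewrite /rest prednK ?addn_gt0 ?N2_gt0 ?orbT //.
rewrite (_ : (N1 + N2).-1 - N1 = N2.-1)%N; last by lia.
by rewrite Y_last sub0r addrK (wcol_root w1_unit (ltnW NL) (w_in_S i)).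
Qed.
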